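(* Let $A$ be a symmetric finite collection of points of $[0,1]^2$, and let $x=(x_1,x_2)$ be an average fixed point of $A$. Then $x_1=x_2$.
   Context: A collection (multiset) $A=(a^k)_{k\in[n]}$ of points of $[0,1]^2$ is symmetric if for all $x_1,x_2$, $|\{k:a^k=(x_1,x_2)\}|=|\{k:a^k=(x_2,x_1)\}|$. For a finite nonempty multiset $B$, $\operatorname{avg}(B)$ is its arithmetic mean (with multiplicity). For $x\in[0,1]^2$: $A_{<,<}(x)=\{a\in A:a_1<x_1,a_2<x_2\}$ and $A_{\le,\le}(x)=\{a\in A:a_1\le x_1,a_2\le x_2\}$. A point $x$ is an average fixed point of $A$ if there exists a sub-multiset $B\subseteq A_{\le,\le}(x)\setminus A_{<,<}(x)$ such that $\operatorname{avg}\big((A\setminus A_{\le,\le}(x))\cup B\big)=x$. *)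

From HB Require Import structures.
From mathcomp Require Import all_boot all_order all_algebra.
Set Implicit Arguments. Unset Strict Implicit. Unset Printing Implicit Defensive.
Import Order.TTheory GRing.Theory Num.Theory.
Local Open Scope ring_scope.

(* A finite multiset of points of R^2 is represented as an indexed family
   a : 'I_n -> R * R (indices carry the multiplicity).  Sub-multisets are
   represented by sets of indices. *)

Definition in_unit_square (R : realFieldType) (p : R * R) : Prop :=
  0 <= p.1 <= 1 /\ 0 <= p.2 <= 1.

Definition symmetric_family (R : realFieldType) (n : nat) (a : 'I_n -> R * R) : Prop :=
  forall x1 x2 : R,
    #|[set k | a k == (x1, x2)]| = #|[set k | a k == (x2, x1)]|.

Definition lt_lt (R : realFieldType) (x p : R * R) : bool := (p.1 < x.1) && (p.2 < x.2).
Definition le_le (R : realFieldType) (x p : R * R) : bool := (p.1 <= x.1) && (p.2 <= x.2).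

Definition avg_idx (R : realFieldType) (n : nat) (a : 'I_n -> R * R) (T : {set 'I_n}) : R * R :=
  ((\sum_(k in T) (a k).1) / #|T|%:R, (\sum_(k in T) (a k).2) / #|T|%:R).

(* x is an average fixed point of A: there is a sub-multiset B of
   A_{<=,<=}(x) \ A_{<,<}(x) such that (A \ A_{<=,<=}(x)) ∪ B is nonempty
   (so its average is defined) and has average x. *)
Definition average_fixed_point (R : realFieldType) (n : nat) (a : 'I_n -> R * R)
    (x : R * R) : Prop :=
  in_unit_square x /\
  exists B : {set 'I_n},
    (forall k, k \in B -> le_le x (a k) && ~~ lt_lt x (a k)) /\
    let T := [set k | ~~ le_le x (a k)] :|: B in
    T != set0 /\ avg_idx a T = x.

(* Suppose x.1 < x.2 and let T be the index set whose average is x, so that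
   the coordinate differences p.1 - p.2 sum to a negative number over T.
   Weigh each point p outside the box A_{<=,<=}(x) with its positive part
   (p.1 - p.2)^+, and compare this weight with that of the mirrored point
   (p.2, p.1).  Every point of T lies outside A_{<,<}(x), so a point of T
   below the diagonal is mirrored outside the box: over T, p.1 - p.2 bounds
   the difference of the two weights from above, while outside T that
   difference is nonpositive.  By symmetry the two weights have the same
   total over A, hence the sum of p.1 - p.2 over T is nonnegative. *)

From HB Require Import structures.
From mathcomp Require Import all_boot all_order all_algebra.
From mathcomp Require Import lra.
Set Implicit Arguments. Unset Strict Implicit. Unset Printing Implicit Defensive.
Import Order.TTheory GRing.Theory Num.Theory.
Local Open Scope ring_scope.

Lemma count_mem_map_enum (T : eqType) (n : nat) (b : 'I_n -> T) (v : T) :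
  count_mem v [seq b k | k <- enum 'I_n] = #|[set k | b k == v]|.
Proof. by rewrite count_map cardsE cardE /enum_mem size_filter filter_predT. Qed.

Section SymmetricFamily.

Variables (R : realFieldType) (n : nat) (a : 'I_n -> R * R).

Lemma preimset_swap_pair (y : R * R) :
  [set k | swap_pair (a k) == y] = [set k | a k == swap_pair y].
Proof.
by apply/setP => k; rewrite !inE; case: (a k) y => p1 p2 [y1 y2]; rewrite !xpair_eqE andbC.
Qed.

Hypothesis a_sym : symmetric_family a.

Lemma symmetric_family_swap : symmetric_family (fun k => swap_pair (a k)).
Proof. by move=> x1 x2; rewrite !preimset_swap_pair a_sym. Qed.

Lemma perm_eq_family_swap :
  perm_eq [seq a k | k <- enum 'I_n] [seq swap_pair (a k) | k <- enum 'I_n].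
Proof.
apply/allP => -[v1 v2] _; apply/eqP.
by rewrite !count_mem_map_enum preimset_swap_pair a_sym.
Qed.

Lemma sum_family_swap (phi : R * R -> R) :
  \sum_(k < n) phi (swap_pair (a k)) = \sum_(k < n) phi (a k).
Proof.
have sum_map (b : 'I_n -> R * R) :
    \sum_(p <- [seq b k | k <- enum 'I_n]) phi p = \sum_(k < n) phi (b k).
  by rewrite big_map big_enum.
by rewrite -!sum_map; apply/esym/perm_big/perm_eq_family_swap.
Qed.

End SymmetricFamily.

Section Excess.

Variables (R : realFieldType) (x : R * R).

Definition outer_excess (p : R * R) : R :=
  if ~~ le_le x p && (p.2 < p.1) then p.1 - p.2 else 0.

Lemma outer_excess_ge0 (p : R * R) : 0 <= outer_excess p.
Proof. by rewrite /outer_excess; case: ifP => // /andP[_]; rewrite subr_ge0 => /ltW. Qed.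

Lemma outer_excess_out (p : R * R) : le_le x p -> outer_excess p = 0.
Proof. by rewrite /outer_excess => ->. Qed.

Hypothesis x_lt : x.1 < x.2.

(* A point off A_{<,<}(x) strictly above the diagonal mirrors to a point
   outside A_{<=,<=}(x); this is where x.1 < x.2 is used. *)
Lemma outer_excess_swap (p : R * R) :
  ~~ lt_lt x p -> p.1 < p.2 -> outer_excess (swap_pair p) = p.2 - p.1.
Proof.
case: p => p1 p2; rewrite /outer_excess /lt_lt /le_le /= => p_off p_lt.
rewrite p_lt andbT ifT // negb_and -!ltNge.
move: p_off; rewrite negb_and -!leNgt => /orP[h|h]; apply/orP; left.
- exact: le_lt_trans h p_lt.
- exact: lt_le_trans x_lt h.
Qed.

Lemma outer_excess_diff_le (p : R * R) :
  ~~ lt_lt x p -> outer_excess p - outer_excess (swap_pair p) <= p.1 - p.2.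
Proof.
move=> p_off; case: (ltgtP p.1 p.2) => [p_lt|p_gt|p_eq].
- by rewrite outer_excess_swap // /outer_excess ltNge (ltW p_lt) andbF; lra.
- have -> : outer_excess (swap_pair p) = 0.
    by rewrite /outer_excess /= ltNge (ltW p_gt) andbF.
  by rewrite /outer_excess; case: ifP => _; lra.
- by rewrite /outer_excess /= p_eq ltxx !andbF; lra.
Qed.

End Excess.

Lemma sum_diff_ge0 (R : realFieldType) (n : nat) (a : 'I_n -> R * R)
    (x : R * R) (T : {set 'I_n}) :
  symmetric_family a -> x.1 < x.2 ->
  (forall k, k \in T -> ~~ lt_lt x (a k)) ->
  (forall k, ~~ le_le x (a k) -> k \in T) ->
  0 <= \sum_(k in T) ((a k).1 - (a k).2).
Proof.
move=> a_sym x_lt T_off T_out.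
pose d (p : R * R) := outer_excess x p - outer_excess x (swap_pair p).
have sum_d0 : \sum_(k < n) d (a k) = 0.
  by rewrite sumrB (sum_family_swap a_sym) subrr.
have sum_d_le : \sum_(k in T) d (a k) <= \sum_(k in T) ((a k).1 - (a k).2).
  by apply: ler_sum => k /T_off; apply: outer_excess_diff_le.
apply: le_trans sum_d_le.
rewrite -[X in X <= _]sum_d0 (bigID (mem T)) /= gerDl; apply: sumr_le0 => k kT.
by rewrite /d outer_excess_out ?sub0r ?oppr_le0 ?outer_excess_ge0 // (contraR (T_out k)).
Qed.

Lemma le_le_swap (R : realFieldType) (x p : R * R) :
  le_le (swap_pair x) (swap_pair p) = le_le x p.
Proof. by rewrite /le_le andbC. Qed.

Lemma lt_lt_swap (R : realFieldType) (x p : R * R) :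
  lt_lt (swap_pair x) (swap_pair p) = lt_lt x p.
Proof. by rewrite /lt_lt andbC. Qed.

Lemma lt_lt_le_le (R : realFieldType) (x p : R * R) : lt_lt x p -> le_le x p.
Proof. by case/andP => /ltW lt1 /ltW lt2; apply/andP. Qed.

Lemma average_fixed_point_swap (R : realFieldType) (n : nat) (a : 'I_n -> R * R)
    (x : R * R) :
  average_fixed_point a x ->
  average_fixed_point (fun k => swap_pair (a k)) (swap_pair x).
Proof.
case=> -[x1_01 x2_01] [B [B_bd [T_ne T_avg]]]; split; first by split.
exists B; split=> [k /B_bd|]; first by rewrite le_le_swap lt_lt_swap.
have -> : [set k | ~~ le_le (swap_pair x) (swap_pair (a k))] = [set k | ~~ le_le x (a k)].
  by apply/setP => k; rewrite !inE le_le_swap.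
by split=> //; rewrite -[in RHS]T_avg.
Qed.

Lemma sum_diff_avg_idx (R : realFieldType) (n : nat) (a : 'I_n -> R * R)
    (x : R * R) (T : {set 'I_n}) :
  T != set0 -> avg_idx a T = x ->
  \sum_(k in T) ((a k).1 - (a k).2) = #|T|%:R * (x.1 - x.2).
Proof.
move=> T_ne <- /=; have cardT_neq0 : #|T|%:R != 0 :> R.
  by rewrite pnatr_eq0 -lt0n card_gt0.
by rewrite sumrB mulrBr ![#|T|%:R * _]mulrC !divfK.
Qed.

Lemma average_fixed_point_le (R : realFieldType) (n : nat) (a : 'I_n -> R * R)
    (x : R * R) :
  symmetric_family a -> average_fixed_point a x -> x.2 <= x.1.
Proof.
move=> a_sym [_ [B [B_bd]]]; set T := _ :|: B => -[T_ne T_avg].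
rewrite leNgt; apply/negP => x_lt.
have : 0 <= \sum_(k in T) ((a k).1 - (a k).2).
  apply: (sum_diff_ge0 a_sym x_lt) => k; rewrite !inE; last by move->.
  by case/orP=> [|/B_bd/andP[] //]; apply: contra; apply: lt_lt_le_le.
by rewrite (sum_diff_avg_idx T_ne T_avg) pmulr_rge0 ?ltr0n ?card_gt0 // subr_ge0 leNgt x_lt.
Qed.

Theorem corollary1 (R : realFieldType) (n : nat) (a : 'I_n -> R * R)
  (hA : forall k, in_unit_square (a k))
  (hsym : symmetric_family a)
  (x : R * R) (hx : average_fixed_point a x) :
  x.1 = x.2.
Proof.
apply/eqP; rewrite eq_le (average_fixed_point_le hsym hx) andbT.
exact: (average_fixed_point_le (symmetric_family_swap hsym) (average_fixed_point_swap hx)).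
Qed.
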